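(* Let $H:\mathbb{R}^{2m}\to\mathbb{R}$ be smooth and let $\bar y\in\mathbb{R}^{2m}$ with $F'=SH_{yy}(\bar y)$ invertible. Consider the scheme $$y_{n+1}-y_n=\theta_n\,S\,\bar\nabla H(y_n,y_{n+1}),\qquad \theta_n=2\Big(SR+F'\coth\frac{h_nF'}{2}\Big)^{-1},$$ where $\bar\nabla H$ is the coordinate increment discrete gradient. Here $R=(R_{jk})$ is the antisymmetric matrix with $$R_{jk}=H_{y^jy^k}\ (k<j),\qquad R_{jj}=0,\qquad R_{jk}=-H_{y^jy^k}\ (k>j),$$ evaluated at $\bar y$. This scheme is energy-preserving: $H(y_{n+1})=H(y_n)$.
   Context: Notation: - $y=(x,p)\in\mathbb{R}^{2m}$ with $y^1,\dots,y^m$ the components of $x$ and $y^{m+1},\dots,y^{2m}$ those of $p$; $y_n=(x_n,p_n)$ and $h_n$ is the time step. - $S=\begin{pmatrix}0&1\\-1&0\end{pmatrix}$ with $m\times m$ blocks. - $H_{yy}$ is the Hessian of $H$. The coordinate increment discrete gradient has components $$\frac{\Delta H}{\Delta y^j}=\frac{H(\hat y^j_n)-H(\hat y^{j-1}_n)}{y^j_{n+1}-y^j_n},\qquad \hat y^j_n=(y^1_{n+1},\dots,y^j_{n+1},y^{j+1}_n,\dots,y^{2m}_n),$$ with the partial derivative as limit when $y^j_{n+1}=y^j_n$. *)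

From HB Require Import structures.
From mathcomp Require Import all_boot all_order all_algebra.
From mathcomp Require Import all_classical all_reals all_analysis.
Set Implicit Arguments. Unset Strict Implicit. Unset Printing Implicit Defensive.
Import Order.TTheory GRing.Theory Num.Theory.
Import numFieldNormedType.Exports.
Local Open Scope ring_scope.

Section Defs.
Variable R : realType.

Definition basis_cV (n : nat) (j : 'I_n) : 'cV[R]_n := delta_mx j 0.

Definition partial (n : nat) (j : 'I_n) (f : 'cV[R]_n -> R) : 'cV[R]_n -> R :=
  fun x => 'D_(basis_cV j) f x.

Fixpoint iter_partial (n : nat) (l : seq 'I_n) (f : 'cV[R]_n -> R) : 'cV[R]_n -> R :=
  match l with
  | [::] => f
  | j :: l' => partial j (iter_partial l' f)
  end.

Definition smooth (n : nat) (f : 'cV[R]_n -> R) : Prop :=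
  forall (l : seq 'I_n) (x : 'cV[R]_n),
    {for x, continuous (iter_partial l f)} /\
    forall j : 'I_n, derivable (iter_partial l f) x (basis_cV j).

Definition hessian (n : nat) (f : 'cV[R]_n -> R) (x : 'cV[R]_n) : 'M[R]_n :=
  \matrix_(j, k) partial j (partial k f) x.

Definition symplS (m : nat) : 'M[R]_(m + m) := block_mx 0 1%:M (- 1%:M) 0.

Definition expm (n : nat) (A : 'M[R]_n) : 'M[R]_n :=
  \matrix_(i, j) limn (fun N : nat => \sum_(k < N) (A ^+ k) i j / (k`!)%:R).

Definition coth_den (n : nat) (A : 'M[R]_n) : 'M[R]_n := expm A - expm (- A).
Definition cothm (n : nat) (A : 'M[R]_n) : 'M[R]_n :=
  (expm A + expm (- A)) *m invmx (coth_den A).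

Definition antisymR (n : nat) (Hyy : 'M[R]_n) : 'M[R]_n :=
  \matrix_(j, k) (if (k < j)%N then Hyy j k
                  else if (j < k)%N then - Hyy j k else 0).

(* Intermediate point  hat y^j = (y'^1..y'^j, y^{j+1}..y^n)  (j = 0..n):
   the first j coordinates come from y', the rest from y. *)
Definition hat_pt (n : nat) (y y' : 'cV[R]_n) (j : nat) : 'cV[R]_n :=
  \col_i (if (i < j)%N then y' i 0 else y i 0).

(* With 0-based index j, the
   component is (H(hat y^{j+1}) - H(hat y^j)) / (y'_j - y_j), and the
   partial derivative dH/dy^j at hat y^j (= hat y^{j+1}) when y'_j = y_j. *)
Definition coord_incr_dgrad (n : nat) (H : 'cV[R]_n -> R) (y y' : 'cV[R]_n)
  : 'cV[R]_n :=
  \col_j (if y' j 0 != y j 0 then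
            (H (hat_pt y y' j.+1) - H (hat_pt y y' j)) / (y' j 0 - y j 0)
          else partial j H (hat_pt y y' j)).

Definition theta_inv_half (m : nat) (Rm Fp : 'M[R]_(m + m)) (h : R)
  : 'M[R]_(m + m) :=
  symplS m *m Rm + Fp *m cothm ((h / 2) *: Fp).
Definition theta (m : nat) (Rm Fp : 'M[R]_(m + m)) (h : R) : 'M[R]_(m + m) :=
  2 *: invmx (theta_inv_half Rm Fp h).

End Defs.

From HB Require Import structures.
From mathcomp Require Import all_boot all_order all_algebra.
From mathcomp Require Import all_classical all_reals all_analysis.
From mathcomp Require Import lra.
Import Order.TTheory GRing.Theory Num.Theory.
Import numFieldNormedType.Exports.
Local Open Scope ring_scope.
Set Implicit Arguments. Unset Strict Implicit. Unset Printing Implicit Defensive.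

(* Write u = y_{n+1} - y_n and g for the coordinate increment discrete gradient,
   which telescopes: g^T u = H(y_{n+1}) - H(y_n).  The scheme says
   M u = 2 S g with M = S R + F' coth(h F'/2), so g = -(S M) u / 2 and
   g^T u = u^T (S M) u / 2.  Now S M = -R - K coth(h S K/2) with K = H_yy(ybar)
   symmetric (Schwarz) and R antisymmetric; since S K is Hamiltonian,
   K exp(c S K) = exp(-c S K)^T K, which makes K coth(h S K/2) antisymmetric.
   Hence S M is skew and its quadratic form vanishes. *)

Lemma trmxX (R : comPzRingType) n (A : 'M[R]_n) k : (A ^+ k)^T = A^T ^+ k.
Proof.
elim: k => [|k IH]; first by rewrite !expr0 trmx1.
by rewrite exprS exprSr [in LHS]/GRing.mul /= trmx_mul IH.
Qed.

Section MatrixExponential.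
Variables (R : realType) (n : nat).
Implicit Types A B P : 'M[R]_n.

Definition expsum A (N : nat) : 'M[R]_n := \sum_(k < N) (k`!%:R)^-1 *: A ^+ k.

Lemma expm_entry_bound A k i j :
  `|(A ^+ k) i j| <= (\sum_a \sum_b `|A a b|) ^+ k.
Proof.
set s := \sum_a \sum_b `|A a b|.
elim: k i j => [|k IH] i j.
  by rewrite expr0 mxE; case: (i == j); rewrite ?normr1 ?normr0.
rewrite exprSr [_ * A]/GRing.mul /= mxE exprSr.
apply: (le_trans (ler_norm_sum _ _ _)).
under eq_bigr do rewrite normrM.
apply: (le_trans (y := \sum_l s ^+ k * `|A l j|)).
  by apply: ler_sum => l _; rewrite ler_wpM2r.
have s0 : 0 <= s by rewrite sumr_ge0 // => a _; rewrite sumr_ge0.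
rewrite -mulr_sumr ler_wpM2l ?exprn_ge0 //.
by apply: ler_sum => a _; rewrite (bigD1 j) //= lerDl sumr_ge0.
Qed.

Lemma expsum_entry A N i j :
  expsum A N i j = \sum_(k < N) (A ^+ k) i j / (k`!)%:R.
Proof. by rewrite summxE; apply: eq_bigr => k _; rewrite mxE mulrC. Qed.

Lemma expm_entryE A i j : expm A i j = limn (fun N => expsum A N i j).
Proof. by rewrite mxE; congr (limn _); apply/funext => N; rewrite expsum_entry. Qed.

(* Each entry series is dominated by the exponential series of the entry sum. *)
Lemma cvgn_expsum A i j : cvgn (fun N => expsum A N i j).
Proof.
set u := fun k : nat => (A ^+ k) i j / (k`!)%:R.
have -> : (fun N => expsum A N i j) = series u.
  by apply/funext => N; rewrite expsum_entry /series /= big_mkord.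
apply: (@normed_cvg _ R^o).
set s := \sum_a \sum_b `|A a b|.
have s0 : 0 <= s by rewrite sumr_ge0 // => a _; rewrite sumr_ge0.
apply: (@series_le_cvg _ _ (exp_coeff s)) => [k|k|k|].
- exact: normr_ge0.
- exact: exp_coeff_ge0.
- rewrite /= /u /exp_coeff normrM normfV normr_nat ler_wpM2r ?invr_ge0 //.
  exact: expm_entry_bound.
- exact: is_cvg_series_exp_coeff.
Qed.

Lemma limn_sum_scale (c : 'I_n -> R) (f : 'I_n -> nat -> R) :
  (forall l, cvgn (f l)) ->
  limn (fun N => \sum_l c l * f l N) = \sum_l c l * limn (f l).
Proof.
move=> cf; apply: cvg_lim => //.
by apply: cvg_big => [|l _]; [exact: add_continuous | exact: cvgMl_tmp].
Qed.

Lemma mulmx_expm_intertwine P A B :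
  P *m A = B *m P -> P *m expm A = expm B *m P.
Proof.
move=> PAB.
have PAk k : P *m A ^+ k = B ^+ k *m P.
  elim: k => [|k IH]; first by rewrite !expr0 mul1mx mulmx1.
  rewrite !exprSr [_ ^+ k * _]/GRing.mul [_ ^+ k * B]/GRing.mul /=.
  by rewrite mulmxA IH -mulmxA PAB mulmxA.
have PAN N : P *m expsum A N = expsum B N *m P.
  rewrite mulmx_sumr mulmx_suml; apply: eq_bigr => k _.
  by rewrite -scalemxAr -scalemxAl PAk.
apply/matrixP => i j; rewrite !mxE.
under eq_bigr do rewrite expm_entryE.
under [RHS]eq_bigr do rewrite expm_entryE mulrC.
rewrite -!limn_sum_scale => [|l|l]; try exact: cvgn_expsum.
congr (limn _); apply/funext => N.
have := congr1 (fun M : 'M[R]_n => M i j) (PAN N); rewrite !mxE => ->.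
by apply: eq_bigr => l _; rewrite mulrC.
Qed.

Lemma expm_trmx A : expm A^T = (expm A)^T.
Proof.
apply/matrixP => i j; rewrite !mxE; congr (limn _); apply/funext => N.
by apply: eq_bigr => k _; rewrite -trmxX mxE.
Qed.

End MatrixExponential.

Section Hamiltonian.
Variables (R : realType) (n : nat) (K S : 'M[R]_n).
Hypotheses (K_sym : K^T = K) (S_skew : S^T = - S).

(* [S K] is Hamiltonian, i.e. [K (S K) = - (S K)^T K], and [expm] respects this. *)
Lemma mulmx_expm_hamiltonian (c : R) :
  K *m expm (c *: (S *m K)) = (expm (- (c *: (S *m K))))^T *m K.
Proof.
rewrite -expm_trmx; apply: mulmx_expm_intertwine.
rewrite [(- _)^T]linearN /= [(_ *: _)^T]linearZ /= trmx_mul K_sym S_skew.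
by rewrite mulmxN scalerN opprK -scalemxAl -scalemxAr mulmxA.
Qed.

Lemma mulmx_cothm_skew (c : R) :
  coth_den (c *: (S *m K)) \in unitmx ->
  (K *m cothm (c *: (S *m K)))^T = - (K *m cothm (c *: (S *m K))).
Proof.
set A := c *: (S *m K); set E := expm A; set E' := expm (- A); set D := coth_den A.
move=> Du.
have KE : K *m E = E'^T *m K by exact: mulmx_expm_hamiltonian.
have KE' : K *m E' = E^T *m K.
  by rewrite /E' -scaleNr mulmx_expm_hamiltonian scaleNr opprK.
have EE' : E *m E' = E' *m E.
  apply: mulmx_expm_intertwine; rewrite mulmxN mulNmx.
  by congr (- _); symmetry; exact: mulmx_expm_intertwine.
have DtK : D^T *m K = - (K *m D).
  by rewrite linearB /= mulmxBl -KE -KE' mulmxBr opprB.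
have CtK : (E + E')^T *m K = K *m (E + E').
  by rewrite linearD /= mulmxDl -KE -KE' mulmxDr addrC.
have DC : D *m (E + E') = (E + E') *m D.
  by rewrite mulmxBl mulmxBr !mulmxDr !mulmxDl EE'.
have DtU : D^T \in unitmx by rewrite unitmx_tr.
have iDtK : invmx D^T *m K = - (K *m invmx D).
  have KD : K *m D = - (D^T *m K) by rewrite DtK opprK.
  rewrite -[LHS](mulmxK Du) -(mulmxA (invmx _)) KD mulmxN (mulKmx DtU).
  by rewrite mulNmx.
have iDC : invmx D *m (E + E') = (E + E') *m invmx D.
  by rewrite -[LHS](mulmxK Du) -(mulmxA (invmx D)) -DC (mulKmx Du).
rewrite /cothm -/A -/E -/E' -/D !trmx_mul K_sym trmx_inv -mulmxA CtK.
by rewrite (mulmxA (invmx _)) iDtK mulNmx -(mulmxA K) iDC mulmxA.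
Qed.

End Hamiltonian.

Lemma symplS_sqr (R : realType) m : symplS R m *m symplS R m = - 1%:M.
Proof.
rewrite /symplS mulmx_block !mul0mx !mulmx0 !mul1mx !mulmx1 !add0r !addr0.
by rewrite (scalar_mx_block m m) opp_block_mx !oppr0.
Qed.

Lemma trmx_symplS (R : realType) m : (symplS R m)^T = - symplS R m.
Proof.
by rewrite tr_block_mx !trmx0 [(- _)^T]linearN /= trmx1 opp_block_mx !oppr0 opprK.
Qed.

Lemma trmx_antisymR (R : realType) n (K : 'M[R]_n) :
  K^T = K -> (antisymR K)^T = - antisymR K.
Proof.
move=> K_sym; apply/matrixP => i j; rewrite !mxE.
have -> : K j i = K i j by rewrite -{1}K_sym mxE.
by case: ltngtP; rewrite ?opprK ?oppr0.
Qed.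

Section CoordinateIncrementDiscreteGradient.
Variables (R : realType) (n : nat) (H : 'cV[R]_n -> R) (y y' : 'cV[R]_n).

Lemma hat_pt0 : hat_pt y y' 0 = y.
Proof. by apply/matrixP => i k; rewrite !mxE (ord1 k). Qed.

Lemma hat_pt_last : hat_pt y y' n = y'.
Proof. by apply/matrixP => i k; rewrite !mxE ltn_ord (ord1 k). Qed.

Lemma hat_ptS_eq (j : 'I_n) : y' j 0 = y j 0 -> hat_pt y y' j.+1 = hat_pt y y' j.
Proof.
move=> yj; apply/matrixP => i k; rewrite !mxE ltnS.
by case: ltngtP => // /val_inj ->.
Qed.

Lemma coord_incr_dgrad_increment (j : 'I_n) :
  coord_incr_dgrad H y y' j 0 * (y' - y) j 0
  = H (hat_pt y y' j.+1) - H (hat_pt y y' j).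
Proof.
rewrite !mxE; case: ifPn => [yj | /negPn/eqP yj].
  by rewrite divfK // subr_eq0.
by rewrite hat_ptS_eq // yj subrr mulr0 subrr.
Qed.

Lemma coord_incr_dgrad_dot :
  ((coord_incr_dgrad H y y')^T *m (y' - y)) 0 0 = H y' - H y.
Proof.
rewrite mxE; under eq_bigr do rewrite mxE coord_incr_dgrad_increment.
rewrite -(big_mkord xpredT (fun j => H (hat_pt y y' j.+1) - H (hat_pt y y' j))).
by rewrite telescope_sumr // hat_pt_last hat_pt0.
Qed.

End CoordinateIncrementDiscreteGradient.

Lemma is_derive_along_line (R : realType) (V : normedModType R) (f : V -> R)
    (v p : V) (s : R) :
  derivable f (s *: v + p) v ->
  is_derive s 1 (fun t : R => f (t *: v + p)) ('D_v f (s *: v + p)).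
Proof.
move=> fv.
have quotE : (fun h : R => h^-1 *: (((fun t : R => f (t *: v + p)) \o shift s) (h *: 1)
            - f (s *: v + p)))
       = (fun h : R => h^-1 *: ((f \o shift (s *: v + p)) (h *: v) - f (s *: v + p))).
  by apply/funext => h /=; rewrite /shift /= [h *: 1]mulr1 scalerDl addrA.
have fline : derivable (fun t : R => f (t *: v + p)) s 1 by rewrite /derivable quotE.
by apply: DeriveDef => //; rewrite /derive quotE.
Qed.

Section SchwarzClairaut.
Variables (R : realType) (V : normedModType R) (f : V -> R).

(* Two applications of the mean value theorem to the mixed second difference. *)
Lemma second_difference_mvt (a b x : V) (t : R) :
  0 < t ->
  (forall y, derivable f y a) -> (forall y, derivable ('D_a f) y b) ->
  exists σ τ, [/\ 0 <= σ <= t, 0 <= τ <= t &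
   f (t *: a + (x + t *: b)) - f (t *: a + x) - f (x + t *: b) + f x
     = t * t * 'D_b ('D_a f) (τ *: b + (σ *: a + x))].
Proof.
move=> t0 fa fab.
pose u : R -> R := (fun s : R => f (s *: a + (x + t *: b))) - (fun s : R => f (s *: a + x)).
pose du s := 'D_a f (s *: a + (x + t *: b)) - 'D_a f (s *: a + x).
have u' s : is_derive s (1 : R) u (du s) by apply: is_deriveB; exact: is_derive_along_line.
have [σ σt Eu] := MVT t0 (fun s _ => u' s)
  (derivable_within_continuous (fun s _ => @ex_derive _ _ _ _ _ _ _ (u' s))).
pose w r := 'D_a f (r *: b + (σ *: a + x)).
have w' r : is_derive r (1 : R) w ('D_b ('D_a f) (r *: b + (σ *: a + x))).
  exact: is_derive_along_line.
have [τ τt Ew] := MVT t0 (fun s _ => w' s)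
  (derivable_within_continuous (fun s _ => @ex_derive _ _ _ _ _ _ _ (w' s))).
exists σ, τ; split; rewrite ?ltW ?(itvP σt) ?(itvP τt) //.
have -> : f (t *: a + (x + t *: b)) - f (t *: a + x) - f (x + t *: b) + f x = u t - u 0.
  have uE s : u s = f (s *: a + (x + t *: b)) - f (s *: a + x) by [].
  by rewrite !uE !scale0r !add0r; lra.
rewrite Eu.
have -> : du σ = w t - w 0.
  rewrite /du /w scale0r add0r; congr (_ - _); congr ('D_a f _).
  by rewrite [RHS]addrCA [x + _]addrC.
by rewrite Ew subr0; lra.
Qed.

Lemma norm_sub_shift_le (x p q : V) (σ τ t : R) :
  0 <= σ <= t -> 0 <= τ <= t ->
  `|x - (τ *: q + (σ *: p + x))| <= t * (`|p| + `|q|).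
Proof.
move=> /andP[σ0 σt] /andP[τ0 τt].
have -> : x - (τ *: q + (σ *: p + x)) = - (τ *: q + σ *: p).
  by rewrite !opprD addrCA (addrCA x) subrr addr0.
rewrite normrN (le_trans (ler_normD _ _)) // !normrZ !ger0_norm //.
by rewrite mulrDr addrC lerD // ler_wpM2r.
Qed.

(* Both mixed second differences equal [t^2] times a mixed partial at a point
   within [t (|a| + |b|)] of [x]; letting [t -> 0] and using continuity at [x]
   forces the two mixed partials to agree there. *)
Lemma derive_mixedC (a b x : V) :
  (forall y, derivable f y a) -> (forall y, derivable f y b) ->
  (forall y, derivable ('D_a f) y b) -> (forall y, derivable ('D_b f) y a) ->
  {for x, continuous ('D_b ('D_a f))} -> {for x, continuous ('D_a ('D_b f))} ->
  'D_b ('D_a f) x = 'D_a ('D_b f) x.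
Proof.
move=> fa fb fab fba c1x c2x.
set c1 := 'D_b ('D_a f) in c1x *; set c2 := 'D_a ('D_b f) in c2x *.
apply/eqP; rewrite -subr_eq0; apply/negPn/negP => d_neq0.
set d := c1 x - c2 x in d_neq0.
have d2_gt0 : 0 < `|d| / 2 by rewrite divr_gt0 ?normr_gt0.
have [e1 e1_gt0 near1] := (nbhs_normP _ _).1 ((cvgrPdist_lt _ _).1 c1x _ d2_gt0).
have [e2 e2_gt0 near2] := (nbhs_normP _ _).1 ((cvgrPdist_lt _ _).1 c2x _ d2_gt0).
set e := Num.min e1 e2.
set t := e / (`|a| + `|b| + 1).
have ab_gt0 : 0 < `|a| + `|b| + 1 by rewrite ltr_pwDr // addr_ge0.
have e_gt0 : 0 < e by rewrite lt_min e1_gt0 e2_gt0.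
have t_gt0 : 0 < t by rewrite divr_gt0.
have t_small : t * (`|a| + `|b|) < e.
  apply: (lt_le_trans (y := t * (`|a| + `|b| + 1))); first by rewrite ltr_pM2l // ltrDl.
  by rewrite /t divfK ?gt_eqF.
have [σ [τ [σt τt E1]]] := second_difference_mvt x t_gt0 fa fab.
have [σ' [τ' [σ't τ't E2]]] := second_difference_mvt x t_gt0 fb fba.
have c12 : c1 (τ *: b + (σ *: a + x)) = c2 (τ' *: a + (σ' *: b + x)).
  apply: (mulfI (x := t * t)); first by rewrite mulf_neq0 // gt_eqF.
  have swap : t *: a + (x + t *: b) = t *: b + (x + t *: a).
    by rewrite addrCA [RHS]addrCA (addrC (t *: a)).
  apply: (etrans (esym E1)); apply: (etrans _ E2).
  rewrite swap (addrC (t *: a) x) (addrC x (t *: b)).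
  by rewrite (addrAC (f _)).
have b1 : `|c1 x - c1 (τ *: b + (σ *: a + x))| < `|d| / 2.
  apply: near1 => /=; apply: (le_lt_trans (norm_sub_shift_le _ _ _ σt τt)).
  by apply: (lt_le_trans t_small); rewrite ge_min lexx.
have b2 : `|c2 x - c2 (τ' *: a + (σ' *: b + x))| < `|d| / 2.
  apply: near2 => /=; apply: (le_lt_trans (norm_sub_shift_le _ _ _ σ't τ't)).
  by rewrite (addrC `|b|); apply: (lt_le_trans t_small); rewrite ge_min lexx orbT.
have : `|d| <= `|c1 x - c1 (τ *: b + (σ *: a + x))|
               + `|c2 x - c2 (τ' *: a + (σ' *: b + x))|.
  rewrite [X in _ <= _ + X]distrC c12.
  exact: (ler_distD (c2 (τ' *: a + (σ' *: b + x))) (c1 x) (c2 x)).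
move=> /le_lt_trans/(_ (ltrD b1 b2)).
by rewrite -splitr ltxx.
Qed.
End SchwarzClairaut.

Lemma hessian_sym (R : realType) n (H : 'cV[R]_n -> R) (x : 'cV[R]_n) :
  smooth H -> (hessian H x)^T = hessian H x.
Proof.
move=> H_smooth; apply/matrixP => i j; rewrite !mxE.
have d1 l (k : 'I_n) y := (H_smooth l y).2 k.
have c2 l := (H_smooth l x).1.
exact: (derive_mixedC (d1 [::] i) (d1 [::] j) (d1 [:: i] j) (d1 [:: j] i)
          (c2 [:: j; i]) (c2 [:: i; j])).
Qed.

Lemma symplS_theta_inv_half_skew (R : realType) m (K : 'M[R]_(m + m)) (h : R) :
  K^T = K -> coth_den ((h / 2) *: (symplS R m *m K)) \in unitmx ->
  let W := symplS R m *m theta_inv_half (antisymR K) (symplS R m *m K) h in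
  W^T = - W.
Proof.
move=> K_sym Du W.
have KC_skew := mulmx_cothm_skew K_sym (trmx_symplS R m) Du.
have -> : W = - antisymR K - K *m cothm ((h / 2) *: (symplS R m *m K)).
  by rewrite /W mulmxDr !mulmxA symplS_sqr !mulNmx !mul1mx.
by rewrite linearB /= [(- _)^T]linearN /= trmx_antisymR // KC_skew opprD !opprK.
Qed.

Lemma skew_quadratic_form0 (R : numFieldType) n (W : 'M[R]_n) (u : 'cV[R]_n) :
  W^T = - W -> (u^T *m W *m u) 0 0 = 0.
Proof.
move=> W_skew.
have : (u^T *m W *m u)^T 0 0 = (u^T *m W *m u) 0 0 by rewrite mxE.
rewrite !trmx_mul trmxK W_skew mulNmx mulmxN mulmxA mxE => /eqP.
by rewrite eq_sym -addr_eq0 -mulr2n mulrn_eq0 => /eqP.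
Qed.

(* [g = -(S M u) / 2], so [g^T u] is a quadratic form of the skew matrix [S M]. *)
Lemma symplectic_update_orthogonal (R : realType) m (M : 'M[R]_(m + m))
    (g u : 'cV[R]_(m + m)) :
  (symplS R m *m M)^T = - (symplS R m *m M) -> M \in unitmx ->
  u = 2 *: invmx M *m symplS R m *m g -> (g^T *m u) 0 0 = 0.
Proof.
set S := symplS R m => W_skew Mu u_def.
have g_def : g = - 2^-1 *: (S *m M *m u).
  rewrite u_def -!scalemxAl -scalemxAr scalerA mulNr mulVf ?pnatr_eq0 // scaleN1r.
  rewrite -!mulmxA (mulmxA M) (mulmxV Mu) mul1mx mulmxA symplS_sqr.
  by rewrite mulNmx mul1mx opprK.
rewrite g_def [(_ *: _)^T]linearZ /= trmx_mul W_skew mulmxN -scalemxAl mulmxA.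
by rewrite mxE mulNmx mxE -(mulmxA u^T S M) skew_quadratic_form0 // oppr0 mulr0.
Qed.

Unset Implicit Arguments.

Theorem proposition6p11 (R : realType) (m : nat)
  (H : 'cV[R]_(m + m) -> R) (ybar : 'cV[R]_(m + m)) (h : R)
  (yn yn1 : 'cV[R]_(m + m)) :
  smooth H ->
  let Fp := symplS R m *m hessian H ybar in
  let Rm := antisymR (hessian H ybar) in
  Fp \in unitmx ->
  coth_den ((h / 2) *: Fp) \in unitmx ->
  theta_inv_half Rm Fp h \in unitmx ->
  yn1 - yn = theta Rm Fp h *m symplS R m *m coord_incr_dgrad H yn yn1 ->
  H yn1 = H yn.
Proof.
move=> H_smooth Fp Rm _ Du Mu step.
have W_skew := symplS_theta_inv_half_skew (hessian_sym ybar H_smooth) Du.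
apply/eqP; rewrite -subr_eq0 -coord_incr_dgrad_dot.
by rewrite (symplectic_update_orthogonal W_skew Mu step).
Qed.
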